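(* Let $\mathcal S$ be a finite generating set of $M_n(\mathbb{C})$, i.e. $\mathcal L(\mathcal S)=M_n(\mathbb{C})$. (1) If $l(\mathcal S)\ge n$ and $\mathcal L_1^0(\mathcal S)$ contains an invertible matrix, then $l_0(\mathcal S)=l(\mathcal S)$. (2) If $l(\mathcal S)=2n-2$ and $\mathcal L_2^0(\mathcal S)$ contains an invertible derogatory matrix, then $l_0(\mathcal S)=l(\mathcal S)$.
   Context: For a finite subset $\mathcal S$ of $M_n(\mathbb{F})$: a word of length $m$ in $\mathcal S$ is a product $S_1S_2\cdots S_m$ with each $S_j\in\mathcal S$; the word of length $0$ is the identity $I_n$. $\mathcal L_k(\mathcal S)$ is the linear span of all words of length at most $k$ (including the identity as the word of length $0$), and $\mathcal L(\mathcal S)=\bigcup_k\mathcal L_k(\mathcal S)$. $\mathcal L_k^0(\mathcal S)$ is the linear span of all words of length between $1$ and $k$ (the identity is not automatically included), and $\mathcal L^0(\mathcal S)=\bigcup_k \mathcal L_k^0(\mathcal S)$. The length $l(\mathcal S)$ is the smallest $k$ with $\mathcal L_k(\mathcal S)=\mathcal L_{k+1}(\mathcal S)$; the length $l_0(\mathcal S)$ is the smallest $k$ with $\mathcal L_k^0(\mathcal S)=\mathcal L_{k+1}^0(\mathcal S)$. A matrix is derogatory if its minimal polynomial has degree less than $n$. *)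

From HB Require Import structures.
From mathcomp Require Import all_boot all_order all_algebra.
Set Implicit Arguments. Unset Strict Implicit. Unset Printing Implicit Defensive.
Import Order.TTheory GRing.Theory Num.Theory.
Local Open Scope ring_scope.

Section Words.
Variables (F : fieldType) (n : nat).

Fixpoint words_exact (S : seq 'M[F]_n) (m : nat) : seq 'M[F]_n :=
  match m with
  | 0 => [:: 1%:M]
  | m'.+1 => [seq A *m W | A <- S, W <- words_exact S m']
  end.

Definition Lk (S : seq 'M[F]_n) (k : nat) : {vspace 'M[F]_n} :=
  <<flatten [seq words_exact S i | i <- iota 0 k.+1]>>%VS.

Definition L0k (S : seq 'M[F]_n) (k : nat) : {vspace 'M[F]_n} :=
  <<flatten [seq words_exact S i | i <- iota 1 k]>>%VS.

Definition generates (S : seq 'M[F]_n) : Prop :=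
  exists k, Lk S k = fullv.

Definition is_length (S : seq 'M[F]_n) (k : nat) : Prop :=
  Lk S k = Lk S k.+1 /\ forall j, (j < k)%N -> Lk S j <> Lk S j.+1.

Definition is_length0 (S : seq 'M[F]_n) (k : nat) : Prop :=
  L0k S k = L0k S k.+1 /\ forall j, (j < k)%N -> L0k S j <> L0k S j.+1.

End Words.

Definition derogatory (F : fieldType) (m : nat) (A : 'M[F]_m.+1) : bool :=
  ((size (mxminpoly A)).-1 < m.+1)%N.

(* If 1 lies in L_m^0(S) with m <= l(S), then L_k^0(S) = L_k(S) for every
   k >= m, so both chains stabilise at the same step and l_0(S) = l(S).
   An invertible A has a minimal polynomial with nonzero constant term, so 1 is
   a combination of A, A^2, ..., A^d with d = deg(minpoly A) <= n; hence
   A in L_c^0(S) gives 1 in L_{cd}^0(S).  In case (1) c = 1 and d <= n <= l(S);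
   in case (2) c = 2 and d <= n - 1 because A is derogatory, so cd <= 2n - 2. *)
From HB Require Import structures.
From mathcomp Require Import all_boot all_order all_algebra.
From mathcomp Require Import zify.
Import Order.TTheory GRing.Theory Num.Theory.
Local Open Scope ring_scope.
Set Implicit Arguments. Unset Strict Implicit.

Section WordSpans.
Variables (F : fieldType) (n : nat) (S : seq 'M[F]_n).

Definition words_range a m := flatten [seq words_exact S i | i <- iota a m].

Definition words_span a m : {vspace 'M[F]_n} := <<words_range a m>>%VS.

Lemma words_rangeP a m x :
  reflect (exists2 i, (a <= i < a + m)%N & x \in words_exact S i)
          (x \in words_range a m).
Proof.
apply: (iffP flattenP) => [[s /mapP[i]] | [i hi hx]].
  by rewrite mem_iota => hi -> hx; exists i.
by exists (words_exact S i) => //; apply/mapP; exists i; rewrite ?mem_iota.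
Qed.

Lemma mem_words_span a m i x :
  (a <= i < a + m)%N -> x \in words_exact S i -> x \in words_span a m.
Proof. by move=> hi hx; apply/memv_span/words_rangeP; exists i. Qed.

Lemma words_span_subvP a m (U : {vspace 'M[F]_n}) :
  (forall i x, (a <= i < a + m)%N -> x \in words_exact S i -> x \in U) ->
  (words_span a m <= U)%VS.
Proof. by move=> hU; apply/span_subvP => x /words_rangeP[i]; apply: hU. Qed.

Lemma words_span_sub a m a' m' :
  (a <= a')%N -> (a' + m' <= a + m)%N -> (words_span a' m' <= words_span a m)%VS.
Proof.
move=> ha hm; apply: words_span_subvP => i x hi; apply: mem_words_span; lia.
Qed.

Lemma words_exactM i j x y :
  x \in words_exact S i -> y \in words_exact S j -> x *m y \in words_exact S (i + j).
Proof.
elim: i x => [|i IH] x /=; first by rewrite inE => /eqP -> hy; rewrite mul1mx.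
case/allpairsP=> [[A W] [hA hW ->]] hy /=.
by rewrite -mulmxA; apply/allpairsP; exists (A, W *m y); split => //; apply: IH.
Qed.

Lemma mulmx_memv_span (X Y : seq 'M[F]_n) (U : {vspace 'M[F]_n}) V W :
  (forall x y, x \in X -> y \in Y -> x *m y \in U) ->
  V \in <<X>>%VS -> W \in <<Y>>%VS -> V *m W \in U.
Proof.
move=> hXY hV hW.
rewrite (coord_span (X := in_tuple X) hV) (coord_span (X := in_tuple Y) hW).
rewrite mulmx_suml; apply: memv_suml => i _; rewrite -scalemxAl mulmx_sumr.
apply: memvZ; apply: memv_suml => j _; rewrite -scalemxAr; apply: memvZ.
by apply: hXY; apply/mem_nth/ltn_ord.
Qed.

Lemma words_spanM a m b k V W :
  V \in words_span a m -> W \in words_span b k ->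
  V *m W \in words_span (a + b) (m + k).-1.
Proof.
apply: mulmx_memv_span => x y /words_rangeP[i hi hx] /words_rangeP[j hj hy].
apply: (mem_words_span (i := i + j)); last exact: words_exactM.
move: hi hj => /andP[? ?] /andP[? ?]; apply/andP; split; lia.
Qed.

(* A word of length a + m + 1 is a letter times a word of length a + m, and
   the latter already lies in [words_span a m]. *)
Lemma words_span_succ a m :
  words_span a m = words_span a m.+1 -> words_span a m.+1 = words_span a m.+2.
Proof.
move=> E; apply/eqP; rewrite eqEsubv words_span_sub ?addnS //=.
apply: words_span_subvP => i x hi hx.
have [hlt | hge] := ltnP i (a + m.+1); first by apply: mem_words_span hx; lia.
move: hx; have {hi hge} -> : i = (a + m).+1 by lia.
move=> /= /allpairsP[[B W] /= [hB hW ->]].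
have hB1 : B \in words_span 1 1.
  apply: (mem_words_span (i := 1)) => //; rewrite -[B]mulmx1.
  exact: (allpairs_f _ hB (mem_head 1%:M [::])).
have hWm : W \in words_span a m by rewrite E; apply: mem_words_span hW; lia.
have sub : (words_span (1 + a) (1 + m).-1 <= words_span a m.+1)%VS.
  by apply: words_span_sub; lia.
exact: subvP sub _ (words_spanM hB1 hWm).
Qed.

Lemma words_span_stationary a j :
  words_span a j = words_span a j.+1 ->
  forall m, (j <= m)%N -> words_span a m = words_span a j.
Proof.
move=> E m /subnK <-; set k := (m - j)%N.
have step i : words_span a (i + j) = words_span a (i + j).+1.
  by elim: i => // i IH; rewrite addSn; apply: words_span_succ.
by elim: k => // k IH; rewrite addSn -step.
Qed.

End WordSpans.

Section Lengths.
Variables (F : fieldType) (n : nat) (S : seq 'M[F]_n).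

Lemma LkE k : Lk S k = words_span S 0 k.+1. Proof. by []. Qed.

Lemma L0kE k : L0k S k = words_span S 1 k. Proof. by []. Qed.

Lemma Lk_length_full l : generates S -> is_length S l -> Lk S l = fullv.
Proof.
case=> k Ek [El _]; apply/eqP; rewrite eqEsubv subvf /= -Ek !LkE in El *.
have [hk | hk] := leqP k l; first exact: words_span_sub.
by rewrite (words_span_stationary El (m := k.+1)) //; lia.
Qed.

Lemma L0k_subv_Lk k : (L0k S k <= Lk S k)%VS.
Proof. by rewrite LkE L0kE words_span_sub. Qed.

Lemma Lk_subv_L0k m k : 1%:M \in L0k S m -> (m <= k)%N -> (Lk S k <= L0k S k)%VS.
Proof.
rewrite LkE L0kE => h1 hmk; apply: words_span_subvP => -[|i] x hi hx; last first.
  by apply: mem_words_span hx; lia.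
move: hx; rewrite inE => /eqP ->.
by apply: subvP h1; apply: words_span_sub.
Qed.

Lemma length0_eq_length m l :
  generates S -> is_length S l -> 1%:M \in L0k S m -> (m <= l)%N ->
  is_length0 S l.
Proof.
move=> gen hl h1 hml.
have Lfull := Lk_length_full gen hl.
have L0full : L0k S l = fullv.
  by apply/eqP; rewrite eqEsubv subvf -Lfull (Lk_subv_L0k h1).
split.
  by apply/eqP; rewrite L0full eqEsubv subvf -L0full !L0kE words_span_sub.
move=> j hj E; case: hl => _ /(_ j hj); apply.
have L0jfull : L0k S j = fullv.
  by rewrite -L0full !L0kE (words_span_stationary E (m := l)) //; lia.
have Lfull_of k : (j <= k)%N -> Lk S k = fullv.
  move=> hjk; apply/eqP; rewrite eqEsubv subvf -L0jfull.
  apply: subv_trans (L0k_subv_Lk k); rewrite !L0kE words_span_sub //; lia.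
by rewrite !Lfull_of.
Qed.

End Lengths.

Section MinimalPolynomial.
Variables (F : fieldType) (n : nat) (A : 'M[F]_n.+1).

Lemma degree_mxminpoly_le : (degree_mxminpoly A <= n.+1)%N.
Proof.
have := dvdp_leq (monic_neq0 (char_poly_monic A)) (mxminpoly_dvd_char A).
by rewrite size_char_poly size_mxminpoly.
Qed.

Lemma horner_mx_coef (p : {poly F}) :
  horner_mx A p = \sum_(i < size p) p`_i *: A ^+ i.
Proof.
rewrite -{1}[p]coefK poly_def rmorph_sum; apply: eq_bigr => i _.
rewrite -mul_polyC rmorphM /= horner_mx_C rmorphXn /= horner_mx_X.
by rewrite -mulmxE mul_scalar_mx.
Qed.

Lemma mxminpoly_coef0_neq0 : A \in unitmx -> (mxminpoly A)`_0 != 0.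
Proof.
move=> hU; apply: contraTN hU => /eqP p0.
have : eigenvalue A 0 by rewrite eigenvalue_root_min /root horner_coef0 p0.
by rewrite /eigenvalue /eigenspace raddf0 subr0 kermx_eq0 row_free_unit.
Qed.

(* From p(A) = 0 with p = mxminpoly A: 1 = - p(0)^-1 (p(A) - p(0)), and p(0) <> 0. *)
Lemma unitmx_one_mem_powers :
  A \in unitmx ->
  1%:M \in <<mkseq (fun i => A ^+ i.+1) (degree_mxminpoly A)>>%VS.
Proof.
move=> hU; set p := mxminpoly A; have p0 := mxminpoly_coef0_neq0 hU.
have := mx_root_minpoly A.
rewrite horner_mx_coef -/p size_mxminpoly big_ord_recl /= expr0.
set R := \sum_(i < _) _ => root0.
have -> : 1%:M = - (p`_0)^-1 *: R.
  have -> : R = - (p`_0 *: 1%:M) by apply/eqP; rewrite -addr_eq0 addrC root0.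
  by rewrite scaleNr scalerN opprK scalerA mulVf // scale1r.
apply: memvZ; apply: memv_suml => i _; apply/memvZ/memv_span.
rewrite /bump add1n; apply: (map_f (fun k => A ^+ k.+1)).
by rewrite mem_iota leq0n add0n ltn_ord.
Qed.

End MinimalPolynomial.

Section InvertibleGenerator.
Variables (F : fieldType) (n : nat) (S : seq 'M[F]_n.+1) (A : 'M[F]_n.+1).

Lemma L0k_exp c i : (0 < c)%N -> A \in L0k S c -> A ^+ i.+1 \in L0k S (c * i.+1).
Proof.
rewrite !L0kE => hc hA; elim: i => [|i IH]; first by rewrite expr1 muln1.
have sub : (words_span S (1 + 1) (c + c * i.+1).-1 <= words_span S 1 (c * i.+2))%VS.
  by apply: words_span_sub; lia.
by rewrite exprS -mulmxE; apply: subvP sub _ (words_spanM hA IH).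
Qed.

Lemma unitmx_one_mem_L0k c :
  (0 < c)%N -> A \in L0k S c -> A \in unitmx ->
  1%:M \in L0k S (c * degree_mxminpoly A).
Proof.
move=> hc hA hU; set d := degree_mxminpoly A.
suff sub : (<<mkseq (fun i => A ^+ i.+1) d>> <= L0k S (c * d))%VS.
  exact: subvP sub _ (unitmx_one_mem_powers hU).
apply/span_subvP => x /mapP[i]; rewrite mem_iota => /andP[_ hi] ->.
have sub : (L0k S (c * i.+1) <= L0k S (c * d))%VS.
  by rewrite !L0kE words_span_sub // add1n add1n ltnS leq_mul2l hi orbT.
exact: subvP sub _ (L0k_exp i hc hA).
Qed.

End InvertibleGenerator.

Theorem mainTheorem2 (C : numClosedFieldType) (n : nat) (S : seq 'M[C]_n.+1) :
  generates S ->
  (forall l : nat, is_length S l ->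
     (n.+1 <= l)%N ->
     (exists A, A \in L0k S 1 /\ A \in unitmx) ->
     is_length0 S l) /\
  (forall l : nat, is_length S l ->
     l = (2 * n.+1 - 2)%N ->
     (exists A, [/\ A \in L0k S 2, A \in unitmx & derogatory A]) ->
     is_length0 S l).
Proof.
move=> gen; split=> [l hl hnl [A [hA hU]] | l hl hl2 [A [hA hU hD]]].
- apply: length0_eq_length gen hl (unitmx_one_mem_L0k _ hA hU) _ => //.
  by rewrite mul1n (leq_trans (degree_mxminpoly_le A)).
- apply: length0_eq_length gen hl (unitmx_one_mem_L0k _ hA hU) _ => //.
  by move: hD; rewrite /derogatory size_mxminpoly hl2 /=; lia.
Qed.
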